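(* For each compact metric space $G\in\mathcal{M}$ and each real $r>\operatorname{diam}G$, the sphere $\{Y\in\mathcal{M}: d_{GH}(G,Y)=r\}$ in $\mathcal{M}$ is path connected (as a subspace of the metric space $(\mathcal{M},d_{GH})$).
   Context: $\mathcal{M}$ denotes the set of isometry classes of compact metric spaces endowed with the Gromov–Hausdorff distance $d_{GH}$ (a metric on $\mathcal{M}$): $d_{GH}(X,Y)$ is the infimum of $r$ such that there exist a metric space $Z$ and subsets $X',Y'\subset Z$ isometric to $X,Y$ with Hausdorff distance $d_H(X',Y')\le r$. *)

From Stdlib Require Import Reals.
From Coquelicot Require Import Coquelicot.
Open Scope R_scope.

Record is_metric (X : Type) (d : X -> X -> R) : Prop := {
  metric_nonneg : forall x y, 0 <= d x y;
  metric_eq0    : forall x y, d x y = 0 <-> x = y;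
  metric_sym    : forall x y, d x y = d y x;
  metric_tri    : forall x y z, d x z <= d x y + d y z
}.

(* Compactness of a metric space (sequential compactness, equivalent to
   compactness for metric spaces). *)
Definition seq_compact (X : Type) (d : X -> X -> R) : Prop :=
  forall u : nat -> X, exists (phi : nat -> nat) (x : X),
    (forall n, (phi n < phi (S n))%nat) /\
    (forall eps, 0 < eps -> exists N, forall n, (N <= n)%nat -> d (u (phi n)) x < eps).

(* A (nonempty) compact metric space; elements of the Gromov-Hausdorff space M
   are isometry classes of these. *)
Record CMS := {
  cms_car :> Type;
  cms_dist : cms_car -> cms_car -> R;
  cms_metric : is_metric cms_car cms_dist;
  cms_inhabited : inhabited cms_car;
  cms_compact : seq_compact cms_car cms_dist
}.

Definition diam (X : CMS) : R :=
  real (Lub_Rbar (fun t => exists x y : X, t = cms_dist X x y)).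

Definition hausdorff_le (Z : Type) (dZ : Z -> Z -> R) (A B : Z -> Prop) (r : R) : Prop :=
  (forall a, A a -> forall eps, 0 < eps -> exists b, B b /\ dZ a b < r + eps) /\
  (forall b, B b -> forall eps, 0 < eps -> exists a, A a /\ dZ a b < r + eps).

Definition isometric_embedding (X : CMS) (Z : Type) (dZ : Z -> Z -> R) (f : X -> Z) : Prop :=
  forall x y : X, dZ (f x) (f y) = cms_dist X x y.

Definition GH_admissible (X Y : CMS) (r : R) : Prop :=
  exists (Z : Type) (dZ : Z -> Z -> R) (f : X -> Z) (g : Y -> Z),
    is_metric Z dZ /\ isometric_embedding X Z dZ f /\ isometric_embedding Y Z dZ g /\
    hausdorff_le Z dZ (fun z => exists x, z = f x) (fun z => exists y, z = g y) r.

Definition dGH (X Y : CMS) : R := real (Glb_Rbar (GH_admissible X Y)).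

(* Path connectedness of the subset S of (M, d_GH). A path in M is lifted to a
   family of representatives gamma : [0,1] -> CMS (possible by choice);
   continuity is w.r.t. d_GH. *)
Definition GH_path_connected (S : CMS -> Prop) : Prop :=
  forall X Y : CMS, S X -> S Y ->
    exists gamma : R -> CMS,
      gamma 0 = X /\ gamma 1 = Y /\
      (forall t, 0 <= t <= 1 -> S (gamma t)) /\
      (forall t, 0 <= t <= 1 -> forall eps, 0 < eps -> exists delta, 0 < delta /\
         forall s, 0 <= s <= 1 -> Rabs (s - t) < delta -> dGH (gamma s) (gamma t) < eps).

From Stdlib Require Import Reals Lra Lia Classical ClassicalEpsilon.
From Coquelicot Require Import Coquelicot.
Open Scope R_scope.

(* Join X and Y through the products X * Y with the metrics
   l * ((1 - t) d_X + t d_Y), 0 < t < 1, choosing the scale l = s(t) that puts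
   each of them on the sphere.  Write P(t, l) for their Gromov-Hausdorff distance
   to G, computed through correspondences.  P is Lipschitz in (t, l), small for
   small l and large for large l; and once P(t, l) > diam G / 2 the excess of the
   rescaled distances over those of G, not their defect, is what counts, which
   gives P(t, l) <= (l / m) P(t, m) for l < m.  With r > diam G this makes
   P(t, .) = r have exactly one root s(t), which is continuous in t, and
   s(0) = s(1) = 1 because the degenerate weights recover X and Y. *)

Section RealInfimum.
Variables (S : R -> Prop) (m c0 : R).
Hypothesis S_c0 : S c0.
Hypothesis S_ge : forall c, S c -> m <= c.

Lemma Glb_Rbar_finite : Glb_Rbar S = Finite (real (Glb_Rbar S)).
Proof.
  destruct (Glb_Rbar_correct S) as [Hlb Hglb].
  pose proof (Hlb c0 S_c0) as H1.
  assert (H2 : Rbar_le m (Glb_Rbar S)) by (apply Hglb; intros x Hx; apply S_ge, Hx).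
  destruct (Glb_Rbar S); simpl in *; easy.
Qed.

Lemma real_Glb_le c : S c -> real (Glb_Rbar S) <= c.
Proof.
  intros Hc. pose proof (proj1 (Glb_Rbar_correct S) c Hc) as H.
  rewrite Glb_Rbar_finite in H. exact H.
Qed.

Lemma real_Glb_ge : m <= real (Glb_Rbar S).
Proof.
  assert (H : Rbar_le m (Glb_Rbar S)).
  { apply (proj2 (Glb_Rbar_correct S)). intros x Hx. apply S_ge, Hx. }
  rewrite Glb_Rbar_finite in H. exact H.
Qed.

Lemma real_Glb_approx eps : 0 < eps -> exists c, S c /\ c < real (Glb_Rbar S) + eps.
Proof.
  intros Heps. apply NNPP. intros Hn.
  assert (Hlb : is_lb_Rbar S (real (Glb_Rbar S) + eps)).
  { intros x Hx. apply Rnot_lt_le. intros Hlt. apply Hn. exists x; auto. }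
  pose proof (proj2 (Glb_Rbar_correct S) _ Hlb) as H.
  rewrite Glb_Rbar_finite in H. simpl in H. lra.
Qed.

End RealInfimum.

Lemma lipschitz_continuity (f : R -> R) (K : R) : 0 <= K ->
  (forall x y, Rabs (f x - f y) <= K * Rabs (x - y)) -> continuity f.
Proof.
  intros HK Hf x eps Heps. exists (eps / (K + 1)). split.
  - apply Rdiv_lt_0_compat; lra.
  - intros y [_ Hy]. simpl in *. unfold R_dist in *.
    apply Rle_lt_trans with ((K + 1) * Rabs (y - x)).
    + pose proof (Rabs_pos (y - x)). pose proof (Hf y x). nra.
    + apply (Rmult_lt_reg_r (/ (K + 1))); [apply Rinv_0_lt_compat; lra|].
      replace ((K + 1) * Rabs (y - x) * / (K + 1)) with (Rabs (y - x)) by (field; lra).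
      exact Hy.
Qed.

Lemma strictly_increasing_ge (phi : nat -> nat) :
  (forall n, (phi n < phi (S n))%nat) -> forall n, (n <= phi n)%nat.
Proof. intros H n. induction n; [lia|]. specialize (H n). lia. Qed.

Lemma strictly_increasing_lt (phi : nat -> nat) :
  (forall n, (phi n < phi (S n))%nat) -> forall m n, (m < n)%nat -> (phi m < phi n)%nat.
Proof. intros H m n Hmn. induction Hmn; [apply H|]. specialize (H m0). lia. Qed.

Section CMSBasics.
Variable A : CMS.

Lemma dist_refl (x : A) : cms_dist A x x = 0.
Proof. apply (metric_eq0 _ _ (cms_metric A)). reflexivity. Qed.
Lemma dist_nonneg (x y : A) : 0 <= cms_dist A x y.
Proof. apply (metric_nonneg _ _ (cms_metric A)). Qed.
Lemma dist_sym (x y : A) : cms_dist A x y = cms_dist A y x.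
Proof. apply (metric_sym _ _ (cms_metric A)). Qed.
Lemma dist_tri (x y z : A) : cms_dist A x z <= cms_dist A x y + cms_dist A y z.
Proof. apply (metric_tri _ _ (cms_metric A)). Qed.

Lemma cms_bounded_from (x0 : A) : exists B, forall y : A, cms_dist A x0 y <= B.
Proof.
  apply NNPP. intros Hunb.
  assert (Hfar : forall n : nat, exists y : A, INR n < cms_dist A x0 y).
  { intros n. apply NNPP. intros Hn. apply Hunb. exists (INR n). intros y.
    apply Rnot_lt_le. intros Hlt. apply Hn. exists y; exact Hlt. }
  destruct (choice _ Hfar) as [u Hu].
  destruct (cms_compact A u) as (phi & x & Hphi & Hconv).
  destruct (Hconv 1 Rlt_0_1) as [N HN].
  destruct (INR_archimed 1 (cms_dist A x0 x + 1)) as [k Hk]; [lra|].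
  set (n := Nat.max N k).
  assert (Hkn : INR k <= INR (phi n)).
  { apply le_INR. pose proof (strictly_increasing_ge phi Hphi n). unfold n in *. lia. }
  specialize (HN n (Nat.le_max_l _ _)). specialize (Hu (phi n)).
  pose proof (dist_tri x0 x (u (phi n))). rewrite (dist_sym x) in *. lra.
Qed.

Lemma cms_bounded : exists B, forall x y : A, cms_dist A x y <= B.
Proof.
  destruct (cms_inhabited A) as [x0]. destruct (cms_bounded_from x0) as [B HB].
  exists (2 * B). intros x y.
  pose proof (dist_tri x x0 y). rewrite (dist_sym x x0) in *.
  pose proof (HB x). pose proof (HB y). lra.
Qed.

Lemma diam_ub (x y : A) : cms_dist A x y <= diam A.
Proof.
  destruct cms_bounded as [B HB]. unfold diam.
  destruct (Lub_Rbar_correct (fun t => exists x y : A, t = cms_dist A x y)) as [Hub Hlub].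
  pose proof (Hub _ (ex_intro _ x (ex_intro _ y eq_refl))) as H1.
  assert (H2 : Rbar_le (Lub_Rbar (fun t => exists x y : A, t = cms_dist A x y)) B).
  { apply Hlub. intros t (x' & y' & ->). apply HB. }
  destruct (Lub_Rbar _); simpl in *; easy.
Qed.

Lemma diam_nonneg : 0 <= diam A.
Proof.
  destruct (cms_inhabited A) as [x]. pose proof (diam_ub x x). rewrite dist_refl in *. exact H.
Qed.

End CMSBasics.
Definition correspondence (A B : Type) (R0 : A -> B -> Prop) : Prop :=
  (forall a, exists b, R0 a b) /\ (forall b, exists a, R0 a b).

Definition half_distortion_le (A : CMS) (T : Type) (e : T -> T -> R)
    (R0 : A -> T -> Prop) (c : R) : Prop :=
  forall g g' p q, R0 g p -> R0 g' q -> Rabs (cms_dist A g g' - e p q) <= 2 * c.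

Definition corr_admissible (A : CMS) (T : Type) (e : T -> T -> R) (c : R) : Prop :=
  exists R0, correspondence A T R0 /\ half_distortion_le A T e R0 c.

(* Equals [dGH A B] for [e = cms_dist B] (see [dGH_corr_dist]), but [e] need not be
   a metric, so rescaled and reweighted distances are handled before they are
   packaged as spaces. *)
Definition corr_dist (A : CMS) (T : Type) (e : T -> T -> R) : R :=
  real (Glb_Rbar (corr_admissible A T e)).

Definition bounded_dissimilarity (T : Type) (e : T -> T -> R) : Prop :=
  inhabited T /\ (exists B, forall p q, Rabs (e p q) <= B) /\ (forall p, e p p = 0).

Lemma cms_bounded_dissimilarity (B : CMS) : bounded_dissimilarity B (cms_dist B).
Proof.
  split; [apply cms_inhabited|split].
  - exists (diam B). intros p q.
    rewrite Rabs_right by (apply Rle_ge, dist_nonneg). apply diam_ub.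
  - apply dist_refl.
Qed.

Section CorrDist.
Variables (A : CMS) (T : Type).

Lemma full_correspondence : inhabited A -> inhabited T ->
  correspondence A T (fun _ _ => True).
Proof. intros [a] [p]. split; intros; eauto. Qed.

Lemma half_distortion_le_full (e : T -> T -> R) (a b : R) :
  (forall g g' : A, cms_dist A g g' <= a) -> (forall p q, Rabs (e p q) <= b) ->
  half_distortion_le A T e (fun _ _ => True) ((a + b) / 2).
Proof.
  intros Ha Hb g g' p q _ _. pose proof (dist_nonneg A g g'). pose proof (Ha g g').
  pose proof (Hb p q) as Hpq. apply Rabs_le_between in Hpq. apply Rabs_le; lra.
Qed.

Variable e : T -> T -> R.
Hypothesis e_bounded : bounded_dissimilarity T e.

Lemma corr_admissible_nonneg c : corr_admissible A T e c -> 0 <= c.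
Proof.
  destruct e_bounded as [[p] [_ He0]]. intros [R0 [[_ Hsurj] Hdis]].
  destruct (Hsurj p) as [g Hg]. specialize (Hdis g g p p Hg Hg).
  rewrite dist_refl, He0, Rminus_0_r, Rabs_R0 in Hdis. lra.
Qed.

Lemma corr_admissible_exists : exists c, corr_admissible A T e c.
Proof.
  destruct e_bounded as [HT [[b Hb] _]]. destruct (cms_bounded A) as [a Ha].
  exists ((a + b) / 2), (fun _ _ => True). split.
  - apply full_correspondence; [apply cms_inhabited|exact HT].
  - apply half_distortion_le_full; assumption.
Qed.

Lemma corr_dist_le R0 c : correspondence A T R0 -> half_distortion_le A T e R0 c ->
  corr_dist A T e <= c.
Proof.
  intros Hcorr Hdis. destruct corr_admissible_exists as [c0 H0].
  apply (real_Glb_le _ 0 c0 H0 corr_admissible_nonneg). exists R0; auto.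
Qed.

Lemma corr_dist_ge m : (forall c, corr_admissible A T e c -> m <= c) -> m <= corr_dist A T e.
Proof.
  intros Hm. destruct corr_admissible_exists as [c0 H0].
  apply (real_Glb_ge _ m c0 H0 Hm).
Qed.

Lemma corr_dist_nonneg : 0 <= corr_dist A T e.
Proof. apply corr_dist_ge, corr_admissible_nonneg. Qed.

Lemma corr_dist_lt c : corr_dist A T e < c -> corr_admissible A T e c.
Proof.
  intros Hlt. destruct corr_admissible_exists as [c0 H0].
  destruct (real_Glb_approx _ 0 c0 H0 corr_admissible_nonneg (c - corr_dist A T e))
    as [c1 [[R0 [Hcorr Hdis]] Hc1]]; [lra|].
  exists R0. split; [exact Hcorr|].
  intros g g' p q Hp Hq. specialize (Hdis g g' p q Hp Hq). unfold corr_dist in *. lra.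
Qed.

Lemma corr_dist_upper a b : (forall g g' : A, cms_dist A g g' <= a) ->
  (forall p q, Rabs (e p q) <= b) -> corr_dist A T e <= (a + b) / 2.
Proof.
  intros Ha Hb. destruct e_bounded as [HT _].
  apply (corr_dist_le (fun _ _ => True)).
  - apply full_correspondence; [apply cms_inhabited|exact HT].
  - apply half_distortion_le_full; assumption.
Qed.

Lemma corr_dist_lower a p q : (forall g g' : A, cms_dist A g g' <= a) ->
  (e p q - a) / 2 <= corr_dist A T e.
Proof.
  intros Ha. apply corr_dist_ge. intros c [R0 [[_ Hsurj] Hdis]].
  destruct (Hsurj p) as [g Hg]. destruct (Hsurj q) as [g' Hg'].
  specialize (Hdis g g' p q Hg Hg'). apply Rabs_le_between in Hdis.
  pose proof (dist_nonneg A g g'). pose proof (Ha g g'). lra.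
Qed.

End CorrDist.

Lemma corr_dist_pullback (A : CMS) (T U : Type) (e : U -> U -> R) (e' : T -> T -> R)
    (pi : T -> U) :
  bounded_dissimilarity T e' -> bounded_dissimilarity U e ->
  (forall u, exists p, pi p = u) -> (forall p q, e' p q = e (pi p) (pi q)) ->
  corr_dist A U e = corr_dist A T e'.
Proof.
  intros He' He Hsurj Hpull. apply Rle_antisym.
  - apply corr_dist_ge; [exact He'|]. intros c [R0 [[Hl Hr] Hdis]].
    apply (corr_dist_le A U e He (fun g u => exists p, pi p = u /\ R0 g p)).
    + split.
      * intros g. destruct (Hl g) as [p Hp]. eauto.
      * intros u. destruct (Hsurj u) as [p Hp]. destruct (Hr p) as [g Hg]. eauto.
    + intros g g' u v [p [<- Hp]] [q [<- Hq]]. rewrite <- Hpull. auto.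
  - apply corr_dist_ge; [exact He|]. intros c [R0 [[Hl Hr] Hdis]].
    apply (corr_dist_le A T e' He' (fun g p => R0 g (pi p))).
    + split.
      * intros g. destruct (Hl g) as [u Hu]. destruct (Hsurj u) as [p <-]. eauto.
      * intros p. apply Hr.
    + intros g g' p q Hp Hq. rewrite Hpull. auto.
Qed.

Lemma corr_dist_lipschitz (A : CMS) (T : Type) (e1 e2 : T -> T -> R) (d : R) :
  bounded_dissimilarity T e1 -> bounded_dissimilarity T e2 ->
  (forall p q, Rabs (e1 p q - e2 p q) <= d) ->
  Rabs (corr_dist A T e1 - corr_dist A T e2) <= d / 2.
Proof.
  assert (Honeside : forall e e', bounded_dissimilarity T e -> bounded_dissimilarity T e' ->
    (forall p q, Rabs (e p q - e' p q) <= d) -> corr_dist A T e <= corr_dist A T e' + d / 2).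
  { intros e e' He He' Hd. apply Rle_plus_epsilon. intros eps Heps.
    destruct (corr_dist_lt A T e' He' (corr_dist A T e' + eps)) as [R0 [Hcorr Hdis]]; [lra|].
    apply (corr_dist_le A T e He R0); [exact Hcorr|].
    intros g g' p q Hp Hq. specialize (Hdis g g' p q Hp Hq). specialize (Hd p q).
    apply Rabs_le_between in Hdis. apply Rabs_le_between in Hd. apply Rabs_le; lra. }
  intros H1 H2 Hd. apply Rabs_le. split.
  - assert (Hd' : forall p q, Rabs (e2 p q - e1 p q) <= d).
    { intros p q. rewrite Rabs_minus_sym. apply Hd. }
    pose proof (Honeside e2 e1 H2 H1 Hd'). lra.
  - pose proof (Honeside e1 e2 H1 H2 Hd). lra.
Qed.

Definition scaled (T : Type) (l : R) (e : T -> T -> R) : T -> T -> R :=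
  fun p q => l * e p q.

Lemma scaled_bounded_dissimilarity (T : Type) (l : R) (e : T -> T -> R) :
  bounded_dissimilarity T e -> bounded_dissimilarity T (scaled T l e).
Proof.
  intros [HT [[b Hb] He0]]. split; [exact HT|split].
  - exists (Rabs l * b). intros p q. unfold scaled. rewrite Rabs_mult.
    apply Rmult_le_compat_l; [apply Rabs_pos|apply Hb].
  - intros p. unfold scaled. rewrite He0. ring.
Qed.

Section ScaledCorrDist.
Variables (A : CMS) (T : Type) (e : T -> T -> R) (a : R).
Hypothesis e_bounded : bounded_dissimilarity T e.
Hypothesis e_nonneg : forall p q, 0 <= e p q.
Hypothesis A_diam : forall g g' : A, cms_dist A g g' <= a.

(* Shrinking the target shrinks the excess [l e - d] by the factor [l / m]; the
   defect [d - l e] stays below [d <= a]. *)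
Lemma half_distortion_le_shrink R0 l m c : 0 < l < m ->
  half_distortion_le A T (scaled T m e) R0 c ->
  half_distortion_le A T (scaled T l e) R0 (Rmax (a / 2) (l / m * c)).
Proof.
  intros Hlm Hdis g g' p q Hp Hq. specialize (Hdis g g' p q Hp Hq).
  unfold scaled in *. apply Rabs_le_between in Hdis.
  pose proof (dist_nonneg A g g'). pose proof (A_diam g g'). pose proof (e_nonneg p q).
  pose proof (Rmax_l (a / 2) (l / m * c)). pose proof (Rmax_r (a / 2) (l / m * c)).
  assert (Hk : 0 < l / m < 1).
  { split; [apply Rdiv_lt_0_compat; lra|apply (proj1 (Rdiv_lt_1 l m ltac:(lra))); lra]. }
  assert (Hle : l * e p q = l / m * (m * e p q)) by (field; lra).
  assert (Hexcess : l / m * (m * e p q) <= l / m * (cms_dist A g g' + 2 * c))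
    by (apply Rmult_le_compat_l; lra).
  assert (Hd : l / m * cms_dist A g g' <= cms_dist A g g') by nra.
  assert (0 <= l * e p q) by nra.
  apply Rabs_le. split; lra.
Qed.

Lemma corr_dist_scaled_shrink l m : 0 < l < m ->
  a < 2 * corr_dist A T (scaled T l e) ->
  corr_dist A T (scaled T l e) <= l / m * corr_dist A T (scaled T m e).
Proof.
  intros Hlm Hbig.
  assert (Hk : 0 < l / m) by (apply Rdiv_lt_0_compat; lra).
  apply Rle_plus_epsilon. intros eps Heps.
  set (c := corr_dist A T (scaled T m e) + eps * m / l).
  destruct (corr_dist_lt A T (scaled T m e) (scaled_bounded_dissimilarity T m e e_bounded) c)
    as [R0 [Hcorr Hdis]].
  { unfold c. assert (0 < eps * m / l) by (apply Rdiv_lt_0_compat; nra). lra. }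
  pose proof (corr_dist_le A T _ (scaled_bounded_dissimilarity T l e e_bounded) R0 _ Hcorr
    (half_distortion_le_shrink R0 l m c Hlm Hdis)) as H.
  unfold Rmax in H. destruct (Rle_dec _ _) in H; [|lra].
  replace (l / m * c) with (l / m * corr_dist A T (scaled T m e) + eps) in H
    by (unfold c; field; lra).
  exact H.
Qed.

End ScaledCorrDist.

Section Gluing.
Variables (A B : CMS) (R0 : A -> B -> Prop) (c : R).
Hypothesis R0_corr : correspondence A B R0.

Definition glue_lengths (a : A) (b : B) : R -> Prop :=
  fun v => exists a' b', R0 a' b' /\ v = cms_dist A a a' + c + cms_dist B b' b.

Definition glue_dist (a : A) (b : B) : R := real (Glb_Rbar (glue_lengths a b)).

Lemma glue_lengths_inhabited a b : exists v, glue_lengths a b v.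
Proof. destruct (proj1 R0_corr a) as [b' Hb']. eexists. exists a, b'. eauto. Qed.

Lemma glue_lengths_ge a b v : glue_lengths a b v -> c <= v.
Proof.
  intros (a' & b' & _ & ->). pose proof (dist_nonneg A a a'). pose proof (dist_nonneg B b' b). lra.
Qed.

Lemma glue_dist_le a b a' b' : R0 a' b' ->
  glue_dist a b <= cms_dist A a a' + c + cms_dist B b' b.
Proof.
  intros HR. destruct (glue_lengths_inhabited a b) as [v0 Hv0].
  apply (real_Glb_le _ c v0 Hv0 (glue_lengths_ge a b)). exists a', b'. auto.
Qed.

Lemma glue_dist_ge a b : c <= glue_dist a b.
Proof.
  destruct (glue_lengths_inhabited a b) as [v0 Hv0].
  apply (real_Glb_ge _ c v0 Hv0 (glue_lengths_ge a b)).
Qed.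

Lemma glue_dist_approx a b eps : 0 < eps -> exists a' b', R0 a' b' /\
  cms_dist A a a' + c + cms_dist B b' b < glue_dist a b + eps.
Proof.
  intros Heps. destruct (glue_lengths_inhabited a b) as [v0 Hv0].
  destruct (real_Glb_approx _ c v0 Hv0 (glue_lengths_ge a b) eps Heps)
    as [v [(a' & b' & HR & ->) Hv]].
  exists a', b'. auto.
Qed.

Lemma glue_dist_tri_l a a' b : glue_dist a b <= cms_dist A a a' + glue_dist a' b.
Proof.
  apply Rle_plus_epsilon. intros eps Heps.
  destruct (glue_dist_approx a' b eps Heps) as (a1 & b1 & HR & H).
  pose proof (glue_dist_le a b a1 b1 HR). pose proof (dist_tri A a a' a1). lra.
Qed.

Lemma glue_dist_tri_r a b b' : glue_dist a b <= glue_dist a b' + cms_dist B b' b.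
Proof.
  apply Rle_plus_epsilon. intros eps Heps.
  destruct (glue_dist_approx a b' eps Heps) as (a1 & b1 & HR & H).
  pose proof (glue_dist_le a b a1 b1 HR). pose proof (dist_tri B b1 b' b). lra.
Qed.

Hypothesis R0_distortion : half_distortion_le A B (cms_dist B) R0 c.

(* Passing from [A] to [B] and back costs at least the distortion [2 c] of [R0]
   that the two crossings of length [c] pay for. *)
Lemma glue_dist_tri_A a a' b : cms_dist A a a' <= glue_dist a b + glue_dist a' b.
Proof.
  apply Rle_plus_epsilon. intros eps Heps.
  destruct (glue_dist_approx a b (eps / 2)) as (a1 & b1 & HR1 & H1); [lra|].
  destruct (glue_dist_approx a' b (eps / 2)) as (a2 & b2 & HR2 & H2); [lra|].
  pose proof (R0_distortion a1 a2 b1 b2 HR1 HR2) as Hdis. apply Rabs_le_between in Hdis.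
  pose proof (dist_tri A a a1 a'). pose proof (dist_tri A a1 a2 a').
  pose proof (dist_tri B b1 b b2). rewrite (dist_sym A a2 a'), (dist_sym B b b2) in *. lra.
Qed.

Lemma glue_dist_tri_B a b b' : cms_dist B b b' <= glue_dist a b + glue_dist a b'.
Proof.
  apply Rle_plus_epsilon. intros eps Heps.
  destruct (glue_dist_approx a b (eps / 2)) as (a1 & b1 & HR1 & H1); [lra|].
  destruct (glue_dist_approx a b' (eps / 2)) as (a2 & b2 & HR2 & H2); [lra|].
  pose proof (R0_distortion a1 a2 b1 b2 HR1 HR2) as Hdis. apply Rabs_le_between in Hdis.
  pose proof (dist_tri B b b1 b'). pose proof (dist_tri B b1 b2 b').
  pose proof (dist_tri A a1 a a2). rewrite (dist_sym B b b1), (dist_sym A a1 a) in *. lra.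
Qed.

Definition glued_dist (x y : A + B) : R :=
  match x, y with
  | inl a, inl a' => cms_dist A a a'
  | inr b, inr b' => cms_dist B b b'
  | inl a, inr b => glue_dist a b
  | inr b, inl a => glue_dist a b
  end.

Hypothesis c_pos : 0 < c.

Lemma glued_dist_metric : is_metric (A + B) glued_dist.
Proof.
  split.
  - intros [a|b] [a'|b']; simpl; try apply dist_nonneg.
    + pose proof (glue_dist_ge a b'). lra.
    + pose proof (glue_dist_ge a' b). lra.
  - intros [a|b] [a'|b']; simpl; split; intros H; try discriminate.
    + f_equal. apply (metric_eq0 _ _ (cms_metric A)), H.
    + injection H as ->. apply dist_refl.
    + pose proof (glue_dist_ge a b'). lra.
    + pose proof (glue_dist_ge a' b). lra.
    + f_equal. apply (metric_eq0 _ _ (cms_metric B)), H.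
    + injection H as ->. apply dist_refl.
  - intros [a|b] [a'|b']; simpl; auto; apply dist_sym.
  - intros [a|b] [a'|b'] [a''|b'']; simpl.
    + apply dist_tri.
    + apply glue_dist_tri_l.
    + apply glue_dist_tri_A.
    + apply glue_dist_tri_r.
    + pose proof (glue_dist_tri_l a'' a' b). rewrite (dist_sym A a'' a') in *. lra.
    + apply glue_dist_tri_B.
    + pose proof (glue_dist_tri_r a'' b b'). rewrite (dist_sym B b' b) in *. lra.
    + apply dist_tri.
Qed.

Lemma GH_admissible_of_correspondence : GH_admissible A B c.
Proof.
  exists (A + B)%type, glued_dist, inl, inr.
  split; [exact glued_dist_metric|split; [|split]].
  - intros x y. reflexivity.
  - intros x y. reflexivity.
  - split.
    + intros z [a ->] eps Heps. destruct (proj1 R0_corr a) as [b Hb].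
      exists (inr b). split; [eauto|]. simpl.
      pose proof (glue_dist_le a b a b Hb). rewrite !dist_refl in *. lra.
    + intros z [b ->] eps Heps. destruct (proj2 R0_corr b) as [a Ha].
      exists (inl a). split; [eauto|]. simpl.
      pose proof (glue_dist_le a b a b Ha). rewrite !dist_refl in *. lra.
Qed.

End Gluing.

Lemma correspondence_of_GH_admissible (A B : CMS) r eps :
  GH_admissible A B r -> 0 < eps -> corr_admissible A B (cms_dist B) (r + eps).
Proof.
  intros (Z & d & f & g & Hm & Hf & Hg & [HA HB]) Heps.
  exists (fun a b => d (f a) (g b) < r + eps / 2). split; [split|].
  - intros a. destruct (HA (f a) (ex_intro _ a eq_refl) (eps / 2)) as [z [[b ->] Hb]]; [lra|].
    eauto.
  - intros b. destruct (HB (g b) (ex_intro _ b eq_refl) (eps / 2)) as [z [[a ->] Ha]]; [lra|].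
    eauto.
  - intros a a' b b' Hab Hab'. rewrite <- Hf, <- Hg.
    pose proof (metric_tri _ _ Hm (f a) (g b) (f a')).
    pose proof (metric_tri _ _ Hm (g b) (g b') (f a')).
    pose proof (metric_tri _ _ Hm (g b) (f a) (g b')).
    pose proof (metric_tri _ _ Hm (f a) (f a') (g b')).
    pose proof (metric_sym _ _ Hm (g b) (f a)).
    pose proof (metric_sym _ _ Hm (g b') (f a')).
    apply Rabs_le. lra.
Qed.

Lemma GH_admissible_nonneg (A B : CMS) r : GH_admissible A B r -> 0 <= r.
Proof.
  intros H. apply Rle_plus_epsilon. intros eps Heps.
  pose proof (corr_admissible_nonneg A B (cms_dist B) (cms_bounded_dissimilarity B) _
    (correspondence_of_GH_admissible A B r eps H Heps)). lra.
Qed.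

Lemma dGH_corr_dist (A B : CMS) : dGH A B = corr_dist A B (cms_dist B).
Proof.
  pose proof (cms_bounded_dissimilarity B) as HB.
  assert (Hr0 : exists r0, GH_admissible A B r0).
  { destruct (corr_admissible_exists A B _ HB) as [c [R0 [Hcorr Hdis]]].
    exists (c + 1). apply (GH_admissible_of_correspondence A B R0); [exact Hcorr| |].
    - intros g g' p q Hp Hq. specialize (Hdis g g' p q Hp Hq). lra.
    - pose proof (corr_admissible_nonneg A B _ HB c (ex_intro _ R0 (conj Hcorr Hdis))). lra. }
  destruct Hr0 as [r0 Hr0]. unfold dGH. apply Rle_antisym; apply Rle_plus_epsilon; intros eps Heps.
  - destruct (corr_dist_lt A B _ HB (corr_dist A B (cms_dist B) + eps / 2))
      as [R0 [Hcorr Hdis]]; [lra|].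
    pose proof (corr_dist_nonneg A B _ HB).
    assert (Hadm : GH_admissible A B (corr_dist A B (cms_dist B) + eps)).
    { apply (GH_admissible_of_correspondence A B R0); [exact Hcorr| |lra].
      intros g g' p q Hp Hq. specialize (Hdis g g' p q Hp Hq). lra. }
    pose proof (real_Glb_le _ 0 r0 Hr0 (GH_admissible_nonneg A B) _ Hadm). lra.
  - destruct (real_Glb_approx _ 0 r0 Hr0 (GH_admissible_nonneg A B) (eps / 2))
      as [r [Hr Hlt]]; [lra|].
    destruct (correspondence_of_GH_admissible A B r (eps / 2) Hr) as [R0 [Hcorr Hdis]]; [lra|].
    pose proof (corr_dist_le A B _ HB R0 _ Hcorr Hdis). lra.
Qed.

Lemma dGH_le_of_correspondence (A B : CMS) (R0 : A -> B -> Prop) c :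
  correspondence A B R0 -> half_distortion_le A B (cms_dist B) R0 c -> dGH A B <= c.
Proof.
  intros. rewrite dGH_corr_dist. apply (corr_dist_le A B _ (cms_bounded_dissimilarity B) R0); auto.
Qed.

Section InterpolatedProduct.
Variables X Y : CMS.

Definition convex_dist (t : R) (p q : X * Y) : R :=
  (1 - t) * cms_dist X (fst p) (fst q) + t * cms_dist Y (snd p) (snd q).

Lemma convex_dist_bounds t p q : 0 <= t <= 1 ->
  0 <= convex_dist t p q <= diam X + diam Y.
Proof.
  intros Ht. unfold convex_dist.
  pose proof (dist_nonneg X (fst p) (fst q)). pose proof (diam_ub X (fst p) (fst q)).
  pose proof (dist_nonneg Y (snd p) (snd q)). pose proof (diam_ub Y (snd p) (snd q)).
  split; nra.
Qed.

Lemma convex_dist_bounded_dissimilarity t : 0 <= t <= 1 ->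
  bounded_dissimilarity (X * Y) (convex_dist t).
Proof.
  intros Ht. destruct (cms_inhabited X) as [x0]. destruct (cms_inhabited Y) as [y0].
  split; [exact (inhabits (x0, y0))|split].
  - exists (diam X + diam Y). intros p q. pose proof (convex_dist_bounds t p q Ht).
    rewrite Rabs_right by lra. lra.
  - intros p. unfold convex_dist. rewrite !dist_refl. ring.
Qed.

Lemma convex_dist_metric t : 0 < t < 1 -> is_metric (X * Y) (convex_dist t).
Proof.
  intros Ht. unfold convex_dist. split.
  - intros p q. pose proof (dist_nonneg X (fst p) (fst q)).
    pose proof (dist_nonneg Y (snd p) (snd q)). nra.
  - intros [x y] [x' y']; simpl. split; intros H.
    + pose proof (dist_nonneg X x x'). pose proof (dist_nonneg Y y y').
      assert (Hx : cms_dist X x x' = 0) by nra. assert (Hy : cms_dist Y y y' = 0) by nra.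
      apply (metric_eq0 _ _ (cms_metric X)) in Hx. apply (metric_eq0 _ _ (cms_metric Y)) in Hy.
      subst. reflexivity.
    + injection H as -> ->. rewrite !dist_refl. ring.
  - intros p q. rewrite (dist_sym X (fst p)), (dist_sym Y (snd p)). reflexivity.
  - intros p q s. pose proof (dist_tri X (fst p) (fst q) (fst s)).
    pose proof (dist_tri Y (snd p) (snd q) (snd s)). nra.
Qed.

Lemma convex_dist_compact t : 0 <= t <= 1 -> seq_compact (X * Y) (convex_dist t).
Proof.
  intros Ht u.
  destruct (cms_compact X (fun n => fst (u n))) as (phi1 & x & Hphi1 & Hconv1).
  destruct (cms_compact Y (fun n => snd (u (phi1 n)))) as (phi2 & y & Hphi2 & Hconv2).
  exists (fun n => phi1 (phi2 n)), (x, y). split.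
  - intros n. apply strictly_increasing_lt; auto.
  - intros eps Heps. destruct (Hconv1 eps Heps) as [N1 HN1]. destruct (Hconv2 eps Heps) as [N2 HN2].
    exists (Nat.max N1 N2). intros n Hn.
    specialize (HN2 n ltac:(lia)).
    specialize (HN1 (phi2 n) ltac:(pose proof (strictly_increasing_ge phi2 Hphi2 n); lia)).
    unfold convex_dist. simpl in *.
    set (a1 := cms_dist X (fst (u (phi1 (phi2 n)))) x) in *.
    set (a2 := cms_dist Y (snd (u (phi1 (phi2 n)))) y) in *.
    assert ((1 - t) * a1 <= (1 - t) * Rmax a1 a2) by (apply Rmult_le_compat_l; [lra|apply Rmax_l]).
    assert (t * a2 <= t * Rmax a1 a2) by (apply Rmult_le_compat_l; [lra|apply Rmax_r]).
    assert (Rmax a1 a2 < eps) by (apply Rmax_lub_lt; assumption).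
    lra.
Qed.

End InterpolatedProduct.

Lemma scaled_metric (T : Type) (l : R) (e : T -> T -> R) :
  0 < l -> is_metric T e -> is_metric T (scaled T l e).
Proof.
  intros Hl [Hnn Heq Hsym Htri]. unfold scaled. split.
  - intros p q. pose proof (Hnn p q). nra.
  - intros p q. rewrite <- Heq. split; intros H; [nra|rewrite H; ring].
  - intros p q. rewrite Hsym. reflexivity.
  - intros p q s. pose proof (Htri p q s). nra.
Qed.

Lemma scaled_compact (T : Type) (l : R) (e : T -> T -> R) :
  0 < l -> seq_compact T e -> seq_compact T (scaled T l e).
Proof.
  intros Hl Hc u. destruct (Hc u) as (phi & x & Hphi & Hconv).
  exists phi, x. split; [exact Hphi|]. intros eps Heps.
  destruct (Hconv (eps / l)) as [N HN]; [apply Rdiv_lt_0_compat; lra|].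
  exists N. intros n Hn. specialize (HN n Hn). unfold scaled.
  apply Rlt_div_r in HN; [lra|lra].
Qed.

Definition interpolated_space (X Y : CMS) (t l : R) (Ht : 0 < t < 1) (Hl : 0 < l) : CMS :=
  {| cms_car := X * Y;
     cms_dist := scaled _ l (convex_dist X Y t);
     cms_metric := scaled_metric _ l _ Hl (convex_dist_metric X Y t Ht);
     cms_inhabited :=
       match cms_inhabited X, cms_inhabited Y with inhabits x, inhabits y => inhabits (x, y) end;
     cms_compact := scaled_compact _ l _ Hl
       (convex_dist_compact X Y t (conj (Rlt_le _ _ (proj1 Ht)) (Rlt_le _ _ (proj2 Ht)))) |}.

Section ImplicitRoot.
Variable Phi : R -> R -> R.
Variables c r K l0 : R.
Hypothesis c_nonneg : 0 <= c.
Hypothesis c_lt_r : c < r.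
Hypothesis K_pos : 0 < K.
Hypothesis l0_pos : 0 < l0.
Hypothesis Phi_lipschitz : forall t s l m, 0 <= t <= 1 -> 0 <= s <= 1 ->
  Rabs (Phi t l - Phi s m) <= K * (Rabs (l - m) + Rabs m * Rabs (t - s)).
Hypothesis Phi_shrink : forall t l m, 0 <= t <= 1 -> 0 < l < m -> c < Phi t l ->
  Phi t l <= l / m * Phi t m.
Hypothesis Phi_below : forall t, 0 <= t <= 1 -> Phi t l0 < r.
Hypothesis Phi_above : forall t, 0 <= t <= 1 -> exists l, l0 < l /\ r < Phi t l.

Lemma Phi_close t s l : 0 <= t <= 1 -> 0 <= s <= 1 -> 0 < l ->
  Rabs (Phi s l - Phi t l) <= K * l * Rabs (s - t).
Proof.
  intros Ht Hs Hl. pose proof (Phi_lipschitz s t l l Hs Ht) as H.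
  rewrite Rminus_diag, Rabs_R0, Rplus_0_l, (Rabs_right l), <- Rmult_assoc in H by lra.
  exact H.
Qed.

Lemma Phi_crossing t lm lp : 0 <= t <= 1 -> lm < lp -> Phi t lm < r < Phi t lp ->
  exists l, lm <= l <= lp /\ Phi t l = r.
Proof.
  intros Ht Hlmp Hcross.
  destruct (IVT (fun l => Phi t l - r) lm lp) as [l [Hl Hroot]]; [| |lra|lra|].
  - apply (lipschitz_continuity _ K); [lra|]. intros x y.
    pose proof (Phi_lipschitz t t x y Ht Ht) as H.
    rewrite Rminus_diag, Rabs_R0, Rmult_0_r, Rplus_0_r in H.
    replace (Phi t x - r - (Phi t y - r)) with (Phi t x - Phi t y) by ring. exact H.
  - exact Hlmp.
  - exists l. split; [exact Hl|lra].
Qed.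

Lemma Phi_lt_below_root t L l : 0 <= t <= 1 -> Phi t L = r -> 0 < l < L -> Phi t l < r.
Proof.
  intros Ht HL Hl. apply Rnot_le_lt. intros Hge.
  pose proof (Phi_shrink t l L Ht Hl ltac:(lra)) as H. rewrite HL in H.
  assert (l / L < 1) by (apply (Rdiv_lt_1 l L); lra).
  assert (l / L * r < 1 * r) by (apply Rmult_lt_compat_r; lra). lra.
Qed.

Lemma Phi_gt_above_root t L m : 0 <= t <= 1 -> Phi t L = r -> 0 < L < m -> r < Phi t m.
Proof.
  intros Ht HL Hm. pose proof (Phi_shrink t L m Ht Hm ltac:(lra)) as H. rewrite HL in H.
  assert (0 < L / m < 1) by (split; [apply Rdiv_lt_0_compat|apply (Rdiv_lt_1 L m)]; lra).
  apply Rnot_le_lt. intros Hle.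
  assert (L / m * Phi t m <= L / m * r) by (apply Rmult_le_compat_l; lra).
  assert (L / m * r < 1 * r) by (apply Rmult_lt_compat_r; lra). lra.
Qed.

Lemma root_unique t l m : 0 <= t <= 1 -> 0 < l -> 0 < m -> Phi t l = r -> Phi t m = r -> l = m.
Proof.
  intros Ht Hl Hm Hpl Hpm. destruct (Rtotal_order l m) as [Hlt|[Heq|Hgt]]; [|exact Heq|].
  - pose proof (Phi_lt_below_root t m l Ht Hpm (conj Hl Hlt)). lra.
  - pose proof (Phi_lt_below_root t l m Ht Hpl (conj Hm Hgt)). lra.
Qed.

Lemma root_exists t : 0 <= t <= 1 -> exists l, 0 < l /\ Phi t l = r.
Proof.
  intros Ht. destruct (Phi_above t Ht) as [lp [Hlp Hp]].
  destruct (Phi_crossing t l0 lp Ht Hlp (conj (Phi_below t Ht) Hp)) as [l [Hl Hroot]].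
  exists l. split; [lra|exact Hroot].
Qed.

Definition root (t : R) : R := epsilon (inhabits 0) (fun l => 0 < l /\ Phi t l = r).

Lemma root_spec t : 0 <= t <= 1 -> 0 < root t /\ Phi t (root t) = r.
Proof. intros Ht. unfold root. apply epsilon_spec, root_exists, Ht. Qed.

Lemma root_eq t l : 0 <= t <= 1 -> 0 < l -> Phi t l = r -> root t = l.
Proof.
  intros Ht Hl Hp. destruct (root_spec t Ht). apply (root_unique t); auto.
Qed.

(* If [Phi t] crosses [r] inside [(L - e, L + e)], the Lipschitz bound in [t] keeps
   the crossing inside this interval for nearby [s], and uniqueness pins [root s]. *)
Lemma root_continuous t : 0 <= t <= 1 -> forall eps, 0 < eps -> exists delta, 0 < delta /\
  forall s, 0 <= s <= 1 -> Rabs (s - t) < delta -> Rabs (root s - root t) < eps.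
Proof.
  intros Ht eps Heps. destruct (root_spec t Ht) as [HL HPL]. set (L := root t) in *.
  set (e := Rmin (eps / 2) (L / 2)).
  assert (He : 0 < e <= eps / 2 /\ e <= L / 2).
  { unfold e. split; [split|]; [apply Rmin_glb_lt; lra|apply Rmin_l|apply Rmin_r]. }
  set (lm := L - e). set (lp := L + e).
  assert (Hm : Phi t lm < r) by (apply (Phi_lt_below_root t L); unfold lm; auto; lra).
  assert (Hp : r < Phi t lp) by (apply (Phi_gt_above_root t L); unfold lp; auto; lra).
  set (eta := Rmin (r - Phi t lm) (Phi t lp - r)).
  assert (Heta : 0 < eta <= r - Phi t lm /\ eta <= Phi t lp - r).
  { unfold eta. split; [split|]; [apply Rmin_glb_lt; lra|apply Rmin_l|apply Rmin_r]. }
  assert (HKlp : 0 < K * lp) by (unfold lp; nra).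
  exists (eta / (K * lp)). split; [apply Rdiv_lt_0_compat; lra|].
  intros s Hs Hst. apply Rlt_div_r in Hst; [|lra].
  assert (Hnear : forall l, 0 < l <= lp -> Rabs (Phi s l - Phi t l) < eta).
  { intros l Hl. pose proof (Phi_close t s l Ht Hs (proj1 Hl)).
    assert (K * l * Rabs (s - t) <= K * lp * Rabs (s - t)).
    { apply Rmult_le_compat_r; [apply Rabs_pos|apply Rmult_le_compat_l; lra]. }
    lra. }
  pose proof (Hnear lm ltac:(unfold lm, lp; lra)) as Hnm.
  pose proof (Hnear lp ltac:(unfold lm, lp; lra)) as Hnp.
  apply Rabs_lt_between in Hnm. apply Rabs_lt_between in Hnp.
  destruct (Phi_crossing s lm lp Hs ltac:(unfold lm, lp; lra) ltac:(lra)) as [l [Hl Hroot]].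
  rewrite (root_eq s l Hs ltac:(unfold lm in Hl; lra) Hroot).
  apply Rabs_lt_between. unfold lm, lp in Hl. lra.
Qed.

End ImplicitRoot.

Lemma nontrivial_of_far (G Z : CMS) : diam G < 2 * dGH G Z -> exists z z' : Z, 0 < cms_dist Z z z'.
Proof.
  intros Hfar. apply NNPP. intros Htriv.
  assert (H0 : forall z z' : Z, Rabs (cms_dist Z z z') <= 0).
  { intros z z'. pose proof (dist_nonneg Z z z'). rewrite Rabs_right by lra.
    apply Rnot_lt_le. intros Hpos. apply Htriv. eauto. }
  pose proof (corr_dist_upper G Z _ (cms_bounded_dissimilarity Z) _ _ (diam_ub G) H0).
  rewrite <- dGH_corr_dist in *. lra.
Qed.

Section SpherePath.
Variables G X Y : CMS.
Variable r : R.
Hypothesis r_gt_diam : diam G < r.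
Hypothesis X_on_sphere : dGH G X = r.
Hypothesis Y_on_sphere : dGH G Y = r.

Let D := diam X + diam Y + 1.
Let K := D / 2.
Let l0 := (r - diam G / 2) / D.

Lemma D_pos : 0 < D.
Proof. pose proof (diam_nonneg X). pose proof (diam_nonneg Y). unfold D. lra. Qed.

Lemma l0_pos : 0 < l0.
Proof. pose proof (diam_nonneg G). pose proof D_pos. apply Rdiv_lt_0_compat; lra. Qed.

Definition gh_radius (t l : R) : R := corr_dist G (X * Y) (scaled _ l (convex_dist X Y t)).

Lemma gh_radius_bounded_dissimilarity t l : 0 <= t <= 1 ->
  bounded_dissimilarity (X * Y) (scaled _ l (convex_dist X Y t)).
Proof. intros Ht. apply scaled_bounded_dissimilarity, convex_dist_bounded_dissimilarity, Ht. Qed.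

Lemma scaled_convex_dist_diff t s l m : 0 <= t <= 1 -> 0 <= s <= 1 -> forall p q,
  Rabs (scaled _ l (convex_dist X Y t) p q - scaled _ m (convex_dist X Y s) p q)
    <= D * (Rabs (l - m) + Rabs m * Rabs (t - s)).
Proof.
  intros Ht Hs p q. unfold scaled.
  pose proof (convex_dist_bounds X Y t p q Ht) as Hb.
  assert (Hts : Rabs (convex_dist X Y t p q - convex_dist X Y s p q) <= D * Rabs (t - s)).
  { unfold convex_dist.
    replace (_ - _) with ((t - s) * (cms_dist Y (snd p) (snd q) - cms_dist X (fst p) (fst q)))
      by ring.
    rewrite Rabs_mult, (Rmult_comm D). apply Rmult_le_compat_l; [apply Rabs_pos|].
    pose proof (dist_nonneg X (fst p) (fst q)). pose proof (diam_ub X (fst p) (fst q)).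
    pose proof (dist_nonneg Y (snd p) (snd q)). pose proof (diam_ub Y (snd p) (snd q)).
    apply Rabs_le. unfold D. lra. }
  replace (l * _ - m * _) with ((l - m) * convex_dist X Y t p q
    + m * (convex_dist X Y t p q - convex_dist X Y s p q)) by ring.
  eapply Rle_trans; [apply Rabs_triang|]. rewrite !Rabs_mult.
  rewrite (Rabs_right (convex_dist X Y t p q)) by lra.
  assert (Rabs (l - m) * convex_dist X Y t p q <= Rabs (l - m) * D)
    by (apply Rmult_le_compat_l; [apply Rabs_pos|unfold D; lra]).
  assert (Rabs m * Rabs (convex_dist X Y t p q - convex_dist X Y s p q)
    <= Rabs m * (D * Rabs (t - s))) by (apply Rmult_le_compat_l; [apply Rabs_pos|exact Hts]).
  lra.
Qed.

Lemma gh_radius_lipschitz t s l m : 0 <= t <= 1 -> 0 <= s <= 1 ->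
  Rabs (gh_radius t l - gh_radius s m) <= K * (Rabs (l - m) + Rabs m * Rabs (t - s)).
Proof.
  intros Ht Hs. unfold gh_radius, K.
  pose proof (corr_dist_lipschitz G _ _ _ _ (gh_radius_bounded_dissimilarity t l Ht)
    (gh_radius_bounded_dissimilarity s m Hs) (scaled_convex_dist_diff t s l m Ht Hs)). lra.
Qed.

Lemma gh_radius_shrink t l m : 0 <= t <= 1 -> 0 < l < m -> diam G / 2 < gh_radius t l ->
  gh_radius t l <= l / m * gh_radius t m.
Proof.
  intros Ht Hlm Hbig. unfold gh_radius in *.
  apply (corr_dist_scaled_shrink G _ _ (diam G)); [| |apply diam_ub|exact Hlm|lra].
  - apply convex_dist_bounded_dissimilarity, Ht.
  - intros p q. apply (convex_dist_bounds X Y t p q Ht).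
Qed.

Lemma gh_radius_l0_lt t : 0 <= t <= 1 -> gh_radius t l0 < r.
Proof.
  intros Ht. pose proof (diam_nonneg G). pose proof l0_pos. pose proof D_pos.
  assert (Hl0D : l0 * D = r - diam G / 2) by (unfold l0; field; lra).
  assert (Hbound : forall p q, Rabs (scaled _ l0 (convex_dist X Y t) p q) <= l0 * D).
  { intros p q. unfold scaled. pose proof (convex_dist_bounds X Y t p q Ht).
    rewrite Rabs_right by nra. apply Rmult_le_compat_l; unfold D; lra. }
  pose proof (corr_dist_upper G _ _ (gh_radius_bounded_dissimilarity t l0 Ht) _ _ (diam_ub G)
    Hbound).
  unfold gh_radius. lra.
Qed.

Lemma convex_dist_pos_somewhere t : 0 <= t <= 1 -> exists p q, 0 < convex_dist X Y t p q.
Proof.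
  intros Ht. pose proof (diam_nonneg G).
  destruct (nontrivial_of_far G X) as (x & x' & Hx); [lra|].
  destruct (nontrivial_of_far G Y) as (y & y' & Hy); [lra|].
  exists (x, y), (x', y'). unfold convex_dist. simpl.
  destruct (Rle_lt_dec t 0); [|nra]. replace t with 0 by lra. lra.
Qed.

Lemma gh_radius_unbounded t : 0 <= t <= 1 -> exists l, l0 < l /\ r < gh_radius t l.
Proof.
  intros Ht. destruct (convex_dist_pos_somewhere t Ht) as (p & q & Hpq).
  pose proof (diam_nonneg G). pose proof l0_pos.
  set (l := l0 + (2 * r + diam G) / convex_dist X Y t p q).
  assert (Hfrac : 0 < (2 * r + diam G) / convex_dist X Y t p q) by (apply Rdiv_lt_0_compat; lra).
  exists l. split; [unfold l; lra|].
  pose proof (corr_dist_lower G _ _ (gh_radius_bounded_dissimilarity t l Ht) (diam G) p q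
    (diam_ub G)).
  assert (Hl : l * convex_dist X Y t p q > 2 * r + diam G).
  { unfold l. rewrite Rmult_plus_distr_r.
    replace ((2 * r + diam G) / convex_dist X Y t p q * convex_dist X Y t p q)
      with (2 * r + diam G) by (field; lra). nra. }
  unfold gh_radius, scaled in *. lra.
Qed.

Definition sphere_scale (t : R) : R := root gh_radius r t.

Lemma sphere_scale_spec t : 0 <= t <= 1 ->
  0 < sphere_scale t /\ gh_radius t (sphere_scale t) = r.
Proof.
  apply (root_spec gh_radius r K l0);
    [unfold K; pose proof D_pos; lra|apply l0_pos|apply gh_radius_lipschitz
    |apply gh_radius_l0_lt|apply gh_radius_unbounded].
Qed.

Lemma sphere_scale_pos t : 0 < t -> t < 1 -> 0 < sphere_scale t.
Proof. intros. apply sphere_scale_spec. lra. Qed.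

Lemma sphere_scale_eq t l : 0 <= t <= 1 -> 0 < l -> gh_radius t l = r -> sphere_scale t = l.
Proof.
  pose proof (diam_nonneg G). pose proof D_pos.
  apply (root_eq gh_radius (diam G / 2) r K l0); unfold K; try lra;
    auto using l0_pos, gh_radius_lipschitz, gh_radius_shrink, gh_radius_l0_lt, gh_radius_unbounded.
Qed.

Lemma sphere_scale_continuous t : 0 <= t <= 1 -> forall eps, 0 < eps ->
  exists delta, 0 < delta /\ forall s, 0 <= s <= 1 -> Rabs (s - t) < delta ->
    Rabs (sphere_scale s - sphere_scale t) < eps.
Proof.
  pose proof (diam_nonneg G). pose proof D_pos.
  apply (root_continuous gh_radius (diam G / 2) r K l0); unfold K; try lra;
    auto using l0_pos, gh_radius_lipschitz, gh_radius_shrink, gh_radius_l0_lt, gh_radius_unbounded.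
Qed.

Lemma gh_radius_0_1 : gh_radius 0 1 = r.
Proof.
  rewrite <- X_on_sphere, dGH_corr_dist. unfold gh_radius. symmetry.
  destruct (cms_inhabited Y) as [y0].
  apply (corr_dist_pullback G _ _ _ _ fst); [apply gh_radius_bounded_dissimilarity; lra
    |apply cms_bounded_dissimilarity|intros x; exists (x, y0); reflexivity|].
  intros p q. unfold scaled, convex_dist. ring.
Qed.

Lemma gh_radius_1_1 : gh_radius 1 1 = r.
Proof.
  rewrite <- Y_on_sphere, dGH_corr_dist. unfold gh_radius. symmetry.
  destruct (cms_inhabited X) as [x0].
  apply (corr_dist_pullback G _ _ _ _ snd); [apply gh_radius_bounded_dissimilarity; lra
    |apply cms_bounded_dissimilarity|intros y; exists (x0, y); reflexivity|].
  intros p q. unfold scaled, convex_dist. ring.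
Qed.

Lemma sphere_scale_0 : sphere_scale 0 = 1.
Proof. apply sphere_scale_eq; [lra|lra|apply gh_radius_0_1]. Qed.

Lemma sphere_scale_1 : sphere_scale 1 = 1.
Proof. apply sphere_scale_eq; [lra|lra|apply gh_radius_1_1]. Qed.

(* At [t = 0] and [t = 1] the weighted product is only a pseudometric space; the
   path uses its metric quotients, [X] and [Y] themselves. *)
Definition sphere_path (t : R) : CMS :=
  match Rlt_le_dec 0 t with
  | left h0 =>
      match Rlt_le_dec t 1 with
      | left h1 =>
          interpolated_space X Y t (sphere_scale t) (conj h0 h1) (sphere_scale_pos t h0 h1)
      | right _ => Y
      end
  | right _ => X
  end.

Lemma sphere_path_0 : sphere_path 0 = X.
Proof. unfold sphere_path. destruct (Rlt_le_dec 0 0); [exfalso; lra|reflexivity]. Qed.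

Lemma sphere_path_1 : sphere_path 1 = Y.
Proof.
  unfold sphere_path. destruct (Rlt_le_dec 0 1); [|exfalso; lra].
  destruct (Rlt_le_dec 1 1); [exfalso; lra|reflexivity].
Qed.

Lemma sphere_path_quotient u : 0 <= u <= 1 -> exists pi : X * Y -> sphere_path u,
  (forall z, exists p, pi p = z) /\
  forall p q,
    cms_dist (sphere_path u) (pi p) (pi q) = scaled _ (sphere_scale u) (convex_dist X Y u) p q.
Proof.
  intros Hu. unfold sphere_path. destruct (Rlt_le_dec 0 u) as [h0|h0].
  - destruct (Rlt_le_dec u 1) as [h1|h1].
    + exists (fun p => p). split; [eauto|reflexivity].
    + replace u with 1 by lra. destruct (cms_inhabited X) as [x0].
      exists snd. split; [intros y; exists (x0, y); reflexivity|].
      intros p q. rewrite sphere_scale_1. unfold scaled, convex_dist. ring.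
  - replace u with 0 by lra. destruct (cms_inhabited Y) as [y0].
    exists fst. split; [intros x; exists (x, y0); reflexivity|].
    intros p q. rewrite sphere_scale_0. unfold scaled, convex_dist. ring.
Qed.

Lemma sphere_path_on_sphere u : 0 <= u <= 1 -> dGH G (sphere_path u) = r.
Proof.
  intros Hu. destruct (sphere_path_quotient u Hu) as [pi [Hsurj Hdist]].
  rewrite dGH_corr_dist, <- (proj2 (sphere_scale_spec u Hu)).
  apply (corr_dist_pullback G _ _ _ _ pi);
    auto using cms_bounded_dissimilarity, gh_radius_bounded_dissimilarity.
Qed.

Lemma sphere_path_dist s t : 0 <= s <= 1 -> 0 <= t <= 1 ->
  dGH (sphere_path s) (sphere_path t)
    <= K * (Rabs (sphere_scale s - sphere_scale t) + Rabs (sphere_scale t) * Rabs (s - t)).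
Proof.
  intros Hs Ht. destruct (sphere_path_quotient s Hs) as [ps [Hps Hds]].
  destruct (sphere_path_quotient t Ht) as [pt [Hpt Hdt]].
  apply (dGH_le_of_correspondence _ _ (fun z w => exists p, ps p = z /\ pt p = w)).
  - split.
    + intros z. destruct (Hps z) as [p <-]. eauto.
    + intros w. destruct (Hpt w) as [p <-]. eauto.
  - intros g g' p q [p0 [<- <-]] [q0 [<- <-]]. rewrite Hds, Hdt. unfold K.
    pose proof (scaled_convex_dist_diff s t (sphere_scale s) (sphere_scale t) Hs Ht p0 q0). lra.
Qed.

Lemma sphere_path_continuous t : 0 <= t <= 1 -> forall eps, 0 < eps -> exists delta, 0 < delta /\
  forall s, 0 <= s <= 1 -> Rabs (s - t) < delta -> dGH (sphere_path s) (sphere_path t) < eps.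
Proof.
  intros Ht eps Heps. pose proof D_pos. destruct (sphere_scale_spec t Ht) as [Hlt _].
  assert (HK : 0 < K) by (unfold K; lra).
  destruct (sphere_scale_continuous t Ht (eps / (2 * K))) as [d1 [Hd1 Hlam]];
    [apply Rdiv_lt_0_compat; lra|].
  set (d2 := eps / (2 * K * sphere_scale t)).
  assert (Hd2 : 0 < d2) by (unfold d2; apply Rdiv_lt_0_compat; nra).
  exists (Rmin d1 d2). split; [apply Rmin_glb_lt; lra|].
  intros s Hs Hst.
  pose proof (Rmin_l d1 d2). pose proof (Rmin_r d1 d2).
  specialize (Hlam s Hs ltac:(lra)). apply Rlt_div_r in Hlam; [|lra].
  assert (Hst2 : Rabs (s - t) * (2 * K * sphere_scale t) < eps)
    by (apply Rlt_div_r; [nra|unfold d2 in *; lra]).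
  pose proof (sphere_path_dist s t Hs Ht). rewrite (Rabs_right (sphere_scale t)) in * by lra.
  lra.
Qed.

End SpherePath.

Theorem corollary3 (G : CMS) (r : R) (hr : diam G < r) :
  GH_path_connected (fun Y : CMS => dGH G Y = r).
Proof.
  intros X Y HX HY. exists (sphere_path G X Y r hr HX HY).
  split; [apply sphere_path_0|split; [apply sphere_path_1|split]].
  - apply sphere_path_on_sphere.
  - apply sphere_path_continuous.
Qed.
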